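(* Let $\gamma > 1.562$. Let $I$ be a $\gamma$-stable instance of the Euclidean Steiner tree problem. Then the (unique) optimal Steiner tree $\mathrm{OPT}$ of $I$ contains no Steiner points, i.e. every vertex of $\mathrm{OPT}$ is a terminal.
   Context: An instance of the Euclidean Steiner tree problem consists of a finite set $V \subset \mathbb{R}^d$ of points, a set $T \subseteq V$ of terminals, and the complete graph on $V$ with edge weights $w_{uv} = \|u - v\|$ (Euclidean distance). Points of $V \setminus T$ are called Steiner points. A Steiner tree is a tree in this complete graph whose vertex set contains all of $T$ (it may contain some Steiner points); its weight is the sum of the weights of its edges. For $\gamma > 1$, the instance is $\gamma$-stable if it has a minimum-weight Steiner tree $\mathrm{OPT}$ such that for every function $w' : V \times V \to \mathbb{R}_{\ge 0}$ with $w_{uv} \le w'_{uv} \le \gamma w_{uv}$ for all $u,v \in V$, every minimum-weight Steiner tree with respect to the weights $w'$ is equal to $\mathrm{OPT}$ (the perturbed weights $w'$ need not be Euclidean or even metric). *)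

From HB Require Import structures.
From mathcomp Require Import all_boot all_order all_algebra.
From mathcomp Require Import reals.
Set Implicit Arguments. Unset Strict Implicit. Unset Printing Implicit Defensive.
Import Order.TTheory GRing.Theory Num.Theory.
Local Open Scope ring_scope.

Section Steiner.
Variables (R : realType) (d : nat) (V : finType).

Definition eucl_dist (x y : 'rV[R]_d) : R :=
  Num.sqrt (\sum_(i < d) (x ord0 i - y ord0 i) ^+ 2).

(* An edge of the complete graph on V is a 2-element subset {u,v} of V.
   Its Euclidean weight ||u - v|| (for a 2-set, the max over its pairs
   is exactly the distance between its two elements). *)
Definition eucl_weight (p : V -> 'rV[R]_d) (e : {set V}) : R :=
  \big[Num.max/0]_(u in e) \big[Num.max/0]_(v in e) eucl_dist (p u) (p v).

Definition adj (E : {set {set V}}) : rel V := fun x y => [set x; y] \in E.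

Definition is_tree (Vt : {set V}) (E : {set {set V}}) : Prop :=
  [/\ Vt != set0,
      (forall e, e \in E -> #|e| = 2%N /\ e \subset Vt),
      (forall u v, u \in Vt -> v \in Vt -> connect (adj E) u v)
    & #|E| = (#|Vt| - 1)%N].

Definition is_steiner_tree (T : {set V}) (Vt : {set V}) (E : {set {set V}}) :=
  is_tree Vt E /\ T \subset Vt.

Definition tree_weight (w : {set V} -> R) (E : {set {set V}}) : R :=
  \sum_(e in E) w e.

Definition is_min_steiner_tree (w : {set V} -> R) (T : {set V})
    (Vt : {set V}) (E : {set {set V}}) : Prop :=
  is_steiner_tree T Vt E /\
  forall Vt' E', is_steiner_tree T Vt' E' -> tree_weight w E <= tree_weight w E'.

Definition gamma_stable (p : V -> 'rV[R]_d) (T : {set V}) (gamma : R) : Prop :=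
  exists VO EO, is_min_steiner_tree (eucl_weight p) T VO EO /\
    forall w' : {set V} -> R,
      (forall e : {set V}, 0 <= w' e) ->
      (forall e : {set V}, #|e| = 2%N -> eucl_weight p e <= w' e <= gamma * eucl_weight p e) ->
      forall Vt E, is_min_steiner_tree w' T Vt E -> Vt = VO /\ E = EO.

End Steiner.

(** Suppose the optimal tree OPT has a Steiner point [s], with neighbours [N].
    Making the edges of OPT [gamma] times heavier keeps OPT the unique optimum, so
    every other Steiner tree [T'] satisfies [gamma w(OPT \ T') < w(T' \ OPT)].
    Replacing the edge [sb] by [ab] ([a, b] in [N]) gives [gamma |sb| < |ab|];
    deleting [s] and joining one neighbour [m] to all the others gives
    [gamma sum_a |sa| < sum_(a <> m) |ma|].  The first family of inequalities,
    against [sum_(a,b) |ab|^2 <= 2 |N| sum_a |sa|^2], forces [|N| <= 5].  For the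
    neighbour [m] closest to [s], the triangle inequality makes the second one fail
    when [|N| <= 4]; when [|N| = 5], averaging it over all [m] and comparing with
    the same quadratic bound fails as soon as [gamma > 1.562]. *)

From HB Require Import structures.
From mathcomp Require Import all_boot all_order all_algebra.
From mathcomp Require Import reals boolp.
From mathcomp Require Import ring lra zify.
Import Order.TTheory GRing.Theory Num.Theory.
Local Open Scope ring_scope.
Set Implicit Arguments. Unset Strict Implicit. Unset Printing Implicit Defensive.

Section CauchySchwarz.
Variables (R : realFieldType) (I : finType).

Lemma CauchySchwarz_sum (a b : I -> R) :
  (\sum_i a i * b i) ^+ 2 <= (\sum_i a i ^+ 2) * (\sum_i b i ^+ 2).
Proof.
set A := \sum_i a i ^+ 2; set B := \sum_i b i ^+ 2; set C := \sum_i a i * b i.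
have B_ge0 : 0 <= B by apply: sumr_ge0 => i _; exact: sqr_ge0.
have [B0 | B_neq0] := eqVneq B 0.
  have b0 i : b i = 0.
    apply/eqP; rewrite -sqrf_eq0; move/eqP: B0; rewrite psumr_eq0 => [/allP|j _].
      by move/(_ i (mem_index_enum _)).
    exact: sqr_ge0.
  by rewrite /C big1 ?expr0n ?B0 ?mulr0 // => i _; rewrite b0 mulr0.
have B_gt0 : 0 < B by rewrite lt_def B_neq0.
have : 0 <= \sum_i (a i * B - b i * C) ^+ 2 by apply: sumr_ge0 => i _; exact: sqr_ge0.
have -> : \sum_i (a i * B - b i * C) ^+ 2 = B * (A * B - C ^+ 2).
  rewrite (eq_bigr (fun i =>
      B ^+ 2 * a i ^+ 2 - (2 * B * C) * (a i * b i) + C ^+ 2 * b i ^+ 2)); last by move=> i _; ring.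
  rewrite big_split big_split /= sumrN -!mulr_sumr -/A -/B -/C; ring.
rewrite pmulr_rge0 //; lra.
Qed.

End CauchySchwarz.

Lemma sum_sqr_pairsB (R : comRingType) (V : finType) (N : {set V}) (y : V -> R) :
  \sum_(a in N) \sum_(b in N) (y a - y b) ^+ 2 =
  2 * #|N|%:R * \sum_(a in N) y a ^+ 2 - 2 * (\sum_(a in N) y a) ^+ 2.
Proof.
have row_sum a : \sum_(b in N) (y a - y b) ^+ 2 =
    #|N|%:R * y a ^+ 2 + \sum_(b in N) y b ^+ 2 - 2 * y a * \sum_(b in N) y b.
  rewrite (eq_bigr (fun b => y a ^+ 2 + y b ^+ 2 - 2 * y a * y b)); last by move=> b _; ring.
  by rewrite !big_split /= sumrN sumr_const -mulr_sumr [#|N|%:R * _]mulr_natl.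
under eq_bigr => a _ do rewrite row_sum.
rewrite !big_split /= sumrN -mulr_sumr -mulr_suml sumr_const -mulr_sumr -mulr_natl.
ring.
Qed.

Section EuclideanDistance.
Variables (R : realType) (d : nat).
Implicit Types x y z c : 'rV[R]_d.

Lemma eucl_dist_ge0 x y : 0 <= eucl_dist x y.
Proof. exact: sqrtr_ge0. Qed.

Lemma sqr_eucl_dist x y :
  eucl_dist x y ^+ 2 = \sum_i (x ord0 i - y ord0 i) ^+ 2.
Proof. by rewrite sqr_sqrtr // sumr_ge0 // => i _; exact: sqr_ge0. Qed.

Lemma eucl_distC x y : eucl_dist x y = eucl_dist y x.
Proof. by rewrite /eucl_dist; congr Num.sqrt; apply: eq_bigr => i _; ring. Qed.

Lemma eucl_distxx x : eucl_dist x x = 0.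
Proof. by rewrite /eucl_dist big1 ?sqrtr0 // => i _; rewrite subrr expr0n. Qed.

Lemma eucl_dist_eq0 x y : (eucl_dist x y == 0) = (x == y).
Proof.
apply/idP/eqP => [|->]; last by rewrite eucl_distxx.
rewrite -sqrf_eq0 sqr_eucl_dist psumr_eq0 => [/allP xy|i _]; last exact: sqr_ge0.
apply/rowP => i; apply/eqP.
by rewrite -subr_eq0 -sqrf_eq0; apply: (implyP (xy i (mem_index_enum _))).
Qed.

Lemma eucl_dist_triangle x y z : eucl_dist x z <= eucl_dist x y + eucl_dist y z.
Proof.
set u := eucl_dist x y; set v := eucl_dist y z.
have [u_ge0 v_ge0] : 0 <= u /\ 0 <= v by split; exact: eucl_dist_ge0.
rewrite -(ler_pXn2r (n := 2)) ?nnegrE ?eucl_dist_ge0 ?addr_ge0 // sqr_eucl_dist.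
pose a i := x ord0 i - y ord0 i; pose b i := y ord0 i - z ord0 i.
have -> : \sum_i (x ord0 i - z ord0 i) ^+ 2 =
    \sum_i a i ^+ 2 + \sum_i b i ^+ 2 + 2 * \sum_i a i * b i.
  by rewrite mulr_sumr -!big_split /=; apply: eq_bigr => i _; rewrite /a /b; ring.
have [-> ->] : \sum_i a i ^+ 2 = u ^+ 2 /\ \sum_i b i ^+ 2 = v ^+ 2.
  by rewrite !sqr_eucl_dist.
have : `|\sum_i a i * b i| <= u * v.
  rewrite -(ler_pXn2r (n := 2)) ?nnegrE ?mulr_ge0 // real_normK ?num_real //.
  by rewrite exprMn !sqr_eucl_dist; exact: CauchySchwarz_sum.
move/(le_trans (ler_norm _)); nra.
Qed.

(* Coordinatewise, the left side is [2 |N| sum_a y_a^2 - 2 (sum_a y_a)^2] with [y_a = x_a - c]. *)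
Lemma sum_sqr_eucl_dist_pairs (V : finType) (N : {set V}) (x : V -> 'rV[R]_d) c :
  \sum_(a in N) \sum_(b in N :\ a) eucl_dist (x a) (x b) ^+ 2 <=
  2 * #|N|%:R * \sum_(a in N) eucl_dist c (x a) ^+ 2.
Proof.
rewrite (eq_bigr (fun a => \sum_(b in N) eucl_dist (x a) (x b) ^+ 2)); last first.
  by move=> a Na; rewrite [RHS](big_setD1 a Na) /= eucl_distxx expr0n add0r.
rewrite mulr_sumr.
under eq_bigr => a _ do under eq_bigr => b _ do rewrite sqr_eucl_dist.
under eq_bigr => a _ do rewrite exchange_big.
under [X in _ <= X]eq_bigr => a _ do rewrite sqr_eucl_dist mulr_sumr.
rewrite exchange_big [X in _ <= X]exchange_big /=; apply: ler_sum => i _.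
pose y a := x a ord0 i - c ord0 i.
have -> : \sum_(a in N) \sum_(b in N) (x a ord0 i - x b ord0 i) ^+ 2 =
          \sum_(a in N) \sum_(b in N) (y a - y b) ^+ 2.
  by apply: eq_bigr => a _; apply: eq_bigr => b _; rewrite /y; congr (_ ^+ 2); ring.
rewrite sum_sqr_pairsB -mulr_sumr.
rewrite [X in _ <= _ * X](eq_bigr (fun a => y a ^+ 2)); last by move=> a _; rewrite /y; ring.
by rewrite lerBlDr lerDl mulr_ge0 ?sqr_ge0.
Qed.

End EuclideanDistance.

Lemma natr_cardsD1 (R : pzRingType) (V : finType) (A : {set V}) a :
  a \in A -> #|A :\ a|%:R = #|A|%:R - 1 :> R.
Proof. by move=> Aa; rewrite (cardsD1 a A) Aa natrD addrC addKr. Qed.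

(* [r a] stands for [|s a|] and [dd a b] for [|a b|], [N] being the neighbours of a
   Steiner point [s]. *)
Section StarConfiguration.
Variables (R : realFieldType) (V : finType) (N : {set V}) (r : V -> R) (dd : V -> V -> R) (g : R).
Hypothesis g_gt : 1562 / 1000 < g.
Hypothesis r_gt0 : {in N, forall a, 0 < r a}.
Hypothesis dd_triangle : {in N &, forall a b, dd a b <= r a + r b}.
Hypothesis sum_sqr_dd_le :
  \sum_(a in N) \sum_(b in N :\ a) dd a b ^+ 2 <= 2 * #|N|%:R * \sum_(a in N) r a ^+ 2.
Hypothesis swap_bound : {in N &, forall a b, a != b -> g * r b < dd a b}.
Hypothesis contract_bound :
  {in N, forall m, g * \sum_(a in N) r a < \sum_(a in N :\ m) dd m a}.

Local Notation k := (#|N|%:R : R).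
Local Notation S := (\sum_(a in N) r a).
Local Notation Q := (\sum_(a in N) r a ^+ 2).

Lemma sum_sqr_dd_ge : g ^+ 2 * ((k - 1) * Q) <= \sum_(a in N) \sum_(b in N :\ a) dd a b ^+ 2.
Proof.
have -> : (k - 1) * Q = \sum_(a in N) \sum_(b in N :\ a) r b ^+ 2.
  rewrite [RHS](eq_bigr (fun a => Q - r a ^+ 2)); last first.
    by move=> a Na; rewrite [Q](big_setD1 a Na) /= addrC addrK.
  by rewrite sumrB sumr_const -mulr_natl; ring.
rewrite mulr_sumr; apply: ler_sum => a Na; rewrite mulr_sumr; apply: ler_sum => b.
rewrite in_setD1 => /andP[ba Nb].
have g_rb_ge0 : 0 <= g * r b by rewrite mulr_ge0 ?ltW ?r_gt0 //; have := g_gt; lra.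
have lt_g_rb_dd : g * r b < dd a b by rewrite swap_bound // eq_sym.
have dd_ge0 : 0 <= dd a b := le_trans g_rb_ge0 (ltW lt_g_rb_dd).
by rewrite -exprMn lerXn2r ?nnegrE // ltW.
Qed.

Lemma card_star_le5 : (#|N| <= 5)%N.
Proof.
rewrite leqNgt; apply/negP => k_gt5.
have [a Na] : exists a, a \in N by apply/set0Pn; rewrite -card_gt0 (leq_trans _ k_gt5).
have Q_gt0 : 0 < Q.
  rewrite (big_setD1 a Na) /= ltr_pwDl ?exprn_gt0 ?r_gt0 //.
  by apply: sumr_ge0 => b _; exact: sqr_ge0.
have : g ^+ 2 * (k - 1) <= 2 * k.
  by rewrite -(ler_pM2r Q_gt0) -mulrA -[2 * k * Q]mulrA (le_trans sum_sqr_dd_ge) // mulrA.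
have : 6%:R <= k :> R by rewrite ler_nat.
have : 12 / 5 < g ^+ 2 by have := g_gt; nra.
nra.
Qed.

Section ClosestNeighbor.
Variable m : V.
Hypotheses (m_in : m \in N) (m_min : {in N, forall a, r m <= r a}).

Lemma contract_min_bound : g * S < (k - 2) * r m + S.
Proof.
apply: (lt_le_trans (contract_bound m_in)).
have -> : (k - 2) * r m + S = \sum_(a in N :\ m) (r m + r a).
  rewrite big_split /= sumr_const -(mulr_natl (r m)) natr_cardsD1 // [S](big_setD1 m) //=; ring.
by apply: ler_sum => a; rewrite in_setD1 => /andP[_ Na]; exact: dd_triangle.
Qed.

Lemma card_mul_min_le_sum : k * r m <= S.
Proof.
have : \sum_(a in N) r m <= S by apply: ler_sum => a Na; exact: m_min.
by rewrite sumr_const mulr_natl.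
Qed.

Lemma sum_sqr_le_min : Q <= (S - (k - 1) * r m) * S.
Proof.
have r_le a : a \in N -> r a <= S - (k - 1) * r m.
  move=> Na; have : \sum_(b in N :\ a) r m <= \sum_(b in N :\ a) r b.
    by apply: ler_sum => b; rewrite in_setD1 => /andP[_ Nb]; exact: m_min.
  rewrite sumr_const -(mulr_natl (r m)) natr_cardsD1 // [S](big_setD1 a Na) /=; lra.
rewrite mulr_sumr; apply: ler_sum => a Na.
by rewrite expr2 ler_wpM2r ?r_le // ltW ?r_gt0.
Qed.

Lemma card_star_ge5 : (5 <= #|N|)%N.
Proof.
rewrite leqNgt; apply/negP => k_lt5.
have rm_gt0 := r_gt0 m_in.
have k_ge1 : 1 <= k by rewrite ler1n card_gt0; apply/set0Pn; exists m.
have k_le4 : k <= 4 by rewrite ler_nat -ltnS.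
have S_gt0 : 0 < S by have := card_mul_min_le_sum; nra.
have : 0 <= (4 - k) * r m by apply: mulr_ge0; lra.
have : 0 < (g - 1562 / 1000) * S by rewrite mulr_gt0 //; have := g_gt; lra.
have := contract_min_bound; have := card_mul_min_le_sum; nra.
Qed.

Lemma card_star_neq5 : #|N| != 5%N.
Proof.
apply/eqP => k5; have kE : k = 5%:R :> R by rewrite k5.
have rm_gt0 := r_gt0 m_in.
have S_gt0 : 0 < S by have := card_mul_min_le_sum; rewrite kE; nra.
have g_gt1 : 1 < g by have := g_gt; lra.
have rm_big : (g - 1) * S < 3 * r m by have := contract_min_bound; rewrite kE; lra.
have Q_le : Q <= (S - 4 * r m) * S by have := sum_sqr_le_min; rewrite kE; lra.
set T := \sum_(a in N) \sum_(b in N :\ a) dd a b.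
have T_ge : 5 * (g * S) <= T.
  have : \sum_(a in N) g * S <= T.
    by apply: ler_sum => a Na; exact/ltW/contract_bound.
  by rewrite sumr_const -kE mulr_natl.
(* AM-GM [2 c x <= x^2 + c^2] on the 20 terms of [T]; [c] is their mean when [T = 5 g S]. *)
set c := g * S / 4.
have amgm : 2 * c * T <= \sum_(a in N) \sum_(b in N :\ a) dd a b ^+ 2 + 20 * c ^+ 2.
  have -> : 20 * c ^+ 2 = \sum_(a in N) \sum_(b in N :\ a) c ^+ 2.
    rewrite (eq_bigr (fun _ => 4 * c ^+ 2)); last first.
      by move=> a Na; rewrite sumr_const -(mulr_natl (c ^+ 2)) natr_cardsD1 // kE; ring.
    by rewrite sumr_const -(mulr_natl (4 * c ^+ 2)) kE; ring.
  rewrite mulr_sumr -big_split /=; apply: ler_sum => a _.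
  rewrite mulr_sumr -big_split /=; apply: ler_sum => b _.
  have := sqr_ge0 (dd a b - c); nra.
have := sum_sqr_dd_le; rewrite kE => sum_le.
have c_ge0 : 0 <= c by rewrite /c divr_ge0 ?mulr_ge0 //; lra.
have sqr_le : 5 / 4 * g ^+ 2 * S ^+ 2 <= 10 * Q.
  have : 2 * c * (5 * (g * S)) <= 2 * c * T by apply: ler_wpM2l => //; rewrite mulr_ge0.
  have -> : 2 * c * (5 * (g * S)) = 5 / 4 * g ^+ 2 * S ^+ 2 + 20 * c ^+ 2 by rewrite /c; field.
  lra.
have : 5 / 4 * g ^+ 2 * S <= 10 * (S - 4 * r m) by rewrite -(ler_pM2r S_gt0); nra.
have : 5 / 4 * g ^+ 2 < 10 - 40 / 3 * (g - 1) by rewrite -(ltr_pM2r S_gt0); nra.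
have := g_gt; nra.
Qed.

End ClosestNeighbor.

Lemma no_star_configuration : N = set0.
Proof.
apply/eqP; apply/contraT => /set0Pn [a0 Na0].
have [m Nm m_min] := arg_minP r Na0.
by move: (card_star_neq5 Nm m_min); rewrite eqn_leq card_star_le5 (card_star_ge5 Nm m_min).
Qed.

End StarConfiguration.

Section Graphs.
Variable V : finType.
Implicit Types (Vt : {set V}) (E : {set {set V}}).

Lemma eq_set2 (x y u v : V) :
  [set x; y] = [set u; v] -> (x = u /\ y = v) \/ (x = v /\ y = u).
Proof.
move=> xy_uv.
have : x \in [set u; v] /\ y \in [set u; v] by rewrite -xy_uv !inE !eqxx orbT.
have : u \in [set x; y] /\ v \in [set x; y] by rewrite xy_uv !inE !eqxx orbT.
rewrite !inE => -[/orP[]/eqP uE /orP[]/eqP vE] [/orP[]/eqP xE /orP[]/eqP yE]; subst; tauto.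
Qed.

Lemma set2_neq (x y z : V) : x != y -> [set x; z] != [set y; z].
Proof. by apply: contraNneq => /eq_set2 [[->] | [-> ->]]. Qed.

Lemma adjC E : symmetric (adj E).
Proof. by move=> x y; rewrite /adj setUC. Qed.

Lemma homo_connect (e e' : rel V) (f : V -> V) :
  (forall x y, e x y -> connect e' (f x) (f y)) ->
  forall x y, connect e x y -> connect e' (f x) (f y).
Proof.
move=> fe x _ /connectP[q e_q ->]; elim: q x e_q => [|y q IHq] x /=; first by rewrite connect0.
by case/andP=> /fe exy /IHq; apply: connect_trans.
Qed.

Fixpoint reachable_within E (r : V) (n : nat) (v : V) : bool :=
  if n is n'.+1 then (v == r) || [exists y, adj E v y && reachable_within E r n' y]
  else v == r.

Lemma path_reachable_within E r q v :
  path (adj E) v q -> last v q = r -> reachable_within E r (size q) v.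
Proof.
elim: q v => [|y q IHq] v /=; first by move=> _ ->; rewrite eqxx.
by case/andP=> vy yq yq_r; apply/orP; right; apply/existsP; exists y; rewrite vy IHq.
Qed.

(* Every vertex other than a root [r] is joined to a neighbour strictly closer to [r];
   this parent map is injective, so a connected graph has at least #|Vt| - 1 edges. *)
Lemma connected_card_edges Vt E :
  Vt != set0 -> {in Vt &, forall u v, connect (adj E) u v} -> (#|Vt| - 1 <= #|E|)%N.
Proof.
case/set0Pn => r Vt_r connE.
have reach v : exists n, reachable_within E r n v || (v \notin Vt).
  case: (boolP (v \in Vt)) => [Vt_v|]; last by exists 0%N; rewrite orbT.
  have /connectP [q vq q_r] := connE v r Vt_v Vt_r.
  by exists (size q); rewrite path_reachable_within.
pose dist v := ex_minn (reach v).
have closer v : v \in Vt -> v != r -> exists y, adj E v y && (dist y < dist v)%N.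
  move=> Vt_v vr; rewrite /dist; case: (ex_minnP (reach v)) => n.
  rewrite Vt_v orbF; case: n => [|n] /=; first by rewrite (negbTE vr).
  rewrite (negbTE vr) /= => /existsP [y /andP[vy y_n]] _.
  exists y; rewrite vy; case: (ex_minnP (reach y)) => n' _ min_n'.
  by rewrite (leq_ltn_trans (min_n' n _)) ?y_n.
pose parent v := odflt v [pick y | adj E v y && (dist y < dist v)%N].
have parentP v : v \in Vt -> v != r -> adj E v (parent v) && (dist (parent v) < dist v)%N.
  move=> Vt_v vr; rewrite /parent; case: pickP => [y //|none].
  by have [y] := closer v Vt_v vr; rewrite none.
pose up v := [set v; parent v].
have up_inj : {in Vt :\ r &, injective up}.
  move=> u v /setD1P [ur Vt_u] /setD1P [vr Vt_v] /eq_set2 [[//]|[uv vu]].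
  have /andP[_ lt_u] := parentP u Vt_u ur; have /andP[_ lt_v] := parentP v Vt_v vr.
  by move: lt_u lt_v; rewrite -uv vu => lt_u /(ltn_trans lt_u); rewrite ltnn.
have up_sub : up @: (Vt :\ r) \subset E.
  by apply/subsetP => _ /imsetP [v /setD1P [vr Vt_v] ->]; case/andP: (parentP v Vt_v vr).
by have := subset_leq_card up_sub; rewrite card_in_imset // (cardsD1 r Vt) Vt_r add1n subn1.
Qed.

Lemma is_tree_card_le Vt E :
  Vt != set0 ->
  (forall e, e \in E -> #|e| = 2 /\ e \subset Vt) ->
  {in Vt &, forall u v, connect (adj E) u v} ->
  (#|E| <= #|Vt| - 1)%N -> is_tree Vt E.
Proof.
move=> Vt0 edgesE connE cardE; split => //.
by apply/eqP; rewrite eqn_leq cardE connected_card_edges.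
Qed.

End Graphs.

Section TreeSurgery.
Variables (V : finType) (Vt : {set V}) (E : {set {set V}}).

Definition neighbors (s : V) : {set V} := [set a | [set s; a] \in E].

Definition star_edges (s : V) : {set {set V}} := [set [set s; a] | a in neighbors s].

Definition contract_star (s m : V) : {set {set V}} :=
  (E :\: star_edges s) :|: [set [set m; a] | a in neighbors s :\ m].

Hypothesis treeE : is_tree Vt E.

Lemma tree_edge e : e \in E -> #|e| = 2 /\ e \subset Vt.
Proof. by case: treeE => _ edgesE _ _; exact: edgesE. Qed.

Variable s : V.
Local Notation N := (neighbors s).

Lemma neighbor_edge a : a \in N -> [set s; a] \in E.
Proof. by rewrite inE. Qed.

Lemma neighbor_neq a : a \in N -> a != s.
Proof.
move/neighbor_edge/tree_edge => [card_sa _]; apply/eqP => as_.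
by move: card_sa; rewrite as_ cards2 eqxx.
Qed.

Lemma neighbor_vertex a : a \in N -> a \in Vt.
Proof. by move/neighbor_edge/tree_edge => [_ /subsetP]; apply; rewrite !inE eqxx orbT. Qed.

Lemma neighbors_neq0 t : s \in Vt -> t \in Vt -> t != s -> N != set0.
Proof.
case: treeE => _ _ connE _ Vt_s Vt_t ts.
have /connectP [[|y q] /= st_path t_last] := connE s t Vt_s Vt_t.
  by rewrite t_last eqxx in ts.
by case/andP: st_path => sy _; apply/set0Pn; exists y; rewrite inE.
Qed.

Lemma tree_swap_edge a b :
  a \in N -> b \in N -> a != b -> is_tree Vt ((E :\ [set s; b]) :|: [set [set a; b]]).
Proof.
move=> Na Nb ab; case: treeE => Vt0 edgesE connE cardE.
set E1 := _ :|: _.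
have sa_E1 : adj E1 s a.
  rewrite /adj in_setU in_setD1 neighbor_edge // andbT [[set s; a]]setUC [[set s; b]]setUC.
  by rewrite set2_neq.
have ab_E1 : adj E1 a b by rewrite /adj in_setU in_set1 eqxx orbT.
apply: is_tree_card_le => //.
- move=> e; rewrite in_setU in_setD1 in_set1 => /orP[/andP[_ Ee]|/eqP ->]; first exact: edgesE.
  split; first by rewrite cards2 ab.
  by apply/subsetP => z /set2P [->|->]; apply: neighbor_vertex.
- move=> u v Vt_u Vt_v; apply: (homo_connect (f := id)) (connE u v Vt_u Vt_v) => x y xy.
  have [/eq_set2 [[-> ->]|[-> ->]] | xy_sb] := eqVneq [set x; y] [set s; b].
  + exact: connect_trans (connect1 sa_E1) (connect1 ab_E1).
  + by apply: connect_trans (connect1 _) (connect1 _); rewrite adjC; [exact: ab_E1 | exact: sa_E1].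
  + by apply: connect1; move: xy; rewrite /adj in_setU in_setD1 xy_sb => ->.
- rewrite -cardE (cardsD1 [set s; b] E) neighbor_edge // add1n cardsU cards1.
  by rewrite (leq_trans (leq_subr _ _)) // addn1.
Qed.

Section Contraction.
Variable m : V.
Hypotheses (Vt_s : s \in Vt) (Nm : m \in N).
Local Notation E' := (contract_star s m).

Lemma notin_contract_star e : e \in E' -> s \notin e.
Proof.
rewrite in_setU => /orP[|/imsetP [a]]; last first.
  by rewrite in_setD1 => /andP[_ Na] ->; rewrite !inE negb_or !(eq_sym s) !neighbor_neq.
rewrite inE => /andP[not_star Ee]; apply: contra not_star => s_e.
have /cards2P [x [y [_ e_xy]]] : #|e| == 2 by rewrite (tree_edge Ee).1.
move: s_e Ee; rewrite e_xy !inE => /orP[]/eqP <- Ee; apply/imsetP.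
  by exists y; rewrite ?inE.
by exists x; rewrite ?inE setUC.
Qed.

Lemma contract_star_connect : {in Vt :\ s &, forall u v, connect (adj E') u v}.
Proof.
case: treeE => _ _ connE _ u v /setD1P [us Vt_u] /setD1P [vs Vt_v].
have m_fan y : y \in N -> connect (adj E') m y.
  move=> Ny; have [-> | ym] := eqVneq y m; first exact: connect0.
  apply: connect1; rewrite /adj /contract_star in_setU; apply/orP; right.
  by apply/imsetP; exists y; rewrite // in_setD1 ym.
pose f x := if x == s then m else x.
have : connect (adj E') (f u) (f v).
  apply: homo_connect (connE u v Vt_u Vt_v) => x y xy; rewrite /f.
  have [xs | xs] := eqVneq x s; have [ys | ys] := eqVneq y s.
  - by move: (tree_edge xy).1; rewrite xs ys cards2 eqxx.
  - by apply: m_fan; rewrite inE -xs.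
  - by rewrite (sym_connect_sym (@adjC _ _)) m_fan // inE setUC -ys.
  apply: connect1; rewrite /adj /contract_star in_setU in_setD (xy : [set x; y] \in E).
  rewrite andbT; apply/orP; left.
  apply/imsetP => -[a _ xy_sa]; have : s \in [set x; y] by rewrite xy_sa !inE eqxx.
  by rewrite !inE !(eq_sym s) (negbTE xs) (negbTE ys).
by rewrite /f (negbTE us) (negbTE vs).
Qed.

Lemma card_contract_star : (#|E'| <= #|Vt :\ s| - 1)%N.
Proof.
case: treeE => _ _ _ cardE.
have -> : #|Vt :\ s| = #|E| by rewrite cardE (cardsD1 s Vt) Vt_s add1n subn1.
have star_sub : star_edges s \subset E.
  by apply/subsetP => _ /imsetP [a Na ->]; exact: neighbor_edge.
have card_star : #|star_edges s| = #|N|.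
  apply: card_in_imset => a b Na _ /eq_set2 [[_ ->] //|[_ bs]].
  by move: (neighbor_neq Na); rewrite bs eqxx.
have card_fan : (#|[set [set m; a] | a in N :\ m]| < #|N|)%N.
  by rewrite (cardsD1 m N) Nm ltnS leq_imset_card.
have := subset_leq_card star_sub; rewrite card_star => card_N.
apply: leq_trans (leq_card_setU _ _) _.
rewrite cardsD (setIidPr star_sub) card_star.
by move: card_fan card_N; move: #|E| #|N| #|imset _ _| => e n f; lia.
Qed.

Lemma tree_contract_star : is_tree (Vt :\ s) E'.
Proof.
apply: is_tree_card_le _ _ contract_star_connect card_contract_star.
  by apply/set0Pn; exists m; rewrite in_setD1 neighbor_neq ?neighbor_vertex.
move=> e E'e; have s_e := notin_contract_star E'e.
case/setUP: E'e => [/setDP [Ee _] | /imsetP [a /setD1P [am Na] ->]].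
  split; first exact: (tree_edge Ee).1.
  apply/subsetP => z ez; rewrite in_setD1 (subsetP (tree_edge Ee).2) // andbT.
  by apply: contraNneq s_e => <-.
split; first by rewrite cards2 eq_sym am.
by apply/subsetP => z /set2P [->|->]; rewrite in_setD1 ?neighbor_neq ?neighbor_vertex.
Qed.

End Contraction.
End TreeSurgery.

Lemma ler_sum_subset (R : numDomainType) (I : finType) (A B : {set I}) (F : I -> R) :
  A \subset B -> {in B, forall i, 0 <= F i} -> \sum_(i in A) F i <= \sum_(i in B) F i.
Proof.
move=> AB F_ge0; rewrite [X in _ <= X](big_setID A) /= (setIidPr AB) lerDl.
by apply: sumr_ge0 => i /setDP [Bi _]; exact: F_ge0.
Qed.

Lemma big_imset_set2 (R : nmodType) (V : finType) (x : V) (A : {set V}) (F : {set V} -> R) :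
  x \notin A -> \sum_(e in [set [set x; a] | a in A]) F e = \sum_(a in A) F [set x; a].
Proof.
move=> xA; rewrite big_imset //= => a b Aa _ /eq_set2 [[_ ->] //|[_ ax]].
by rewrite -ax Aa in xA.
Qed.

Section EuclideanWeight.
Variables (R : realType) (d : nat) (V : finType) (p : V -> 'rV[R]_d).

Lemma eucl_weight_ge0 e : 0 <= eucl_weight p e.
Proof. exact: bigmax_ge_id. Qed.

Lemma eucl_weight_set2 a b : eucl_weight p [set a; b] = eucl_dist (p a) (p b).
Proof.
apply/eqP; rewrite eq_le; apply/andP; split.
  apply: bigmax_le => [|u]; first exact: eucl_dist_ge0.
  move=> /set2P [] ->; apply: bigmax_le => [|v]; rewrite ?eucl_dist_ge0 //;
    by move=> /set2P [] ->; rewrite ?eucl_distxx ?eucl_dist_ge0 // eucl_distC.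
apply: (@bigmax_sup _ _ _ _ a) => //; first by rewrite !inE eqxx.
by apply: (@bigmax_sup _ _ _ _ b) => //; rewrite !inE eqxx orbT.
Qed.

End EuclideanWeight.

Lemma exists_min_steiner_tree (R : realType) (V : finType) (w : {set V} -> R) T Vt E :
  is_steiner_tree T Vt E -> exists Vm Em, is_min_steiner_tree w T Vm Em.
Proof.
move=> stE; pose P (x : {set V} * {set {set V}}) := `[< is_steiner_tree T x.1 x.2 >].
have P0 : P (Vt, E) by apply/asboolP.
case: (arg_minP (fun x => tree_weight w x.2) P0) => -[Vm Em] /asboolP stm min_m.
by exists Vm, Em; split => // V' E' st'; apply: (min_m (V', E')); apply/asboolP.
Qed.

Section Stability.
Variables (R : realType) (d : nat) (V : finType) (p : V -> 'rV[R]_d).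
Variables (T : {set V}) (gamma : R) (Vt : {set V}) (E : {set {set V}}).
Hypotheses (gamma_ge1 : 1 <= gamma) (stable : gamma_stable p T gamma).
Hypothesis opt : is_min_steiner_tree (eucl_weight p) T Vt E.
Local Notation w := (eucl_weight p).

Lemma gamma_stable_strict (w' : {set V} -> R) :
  (forall e, 0 <= w' e) ->
  (forall e : {set V}, #|e| = 2 -> w e <= w' e <= gamma * w e) ->
  forall Vt' E', is_steiner_tree T Vt' E' -> (Vt', E') <> (Vt, E) ->
  tree_weight w' E < tree_weight w' E'.
Proof.
move=> w'_ge0 w'_bounds Vt' E' st' neq.
have [VO [EO [_ uniq]]] := stable.
have [eVt eE] : Vt = VO /\ E = EO.
  apply: (uniq w _ _ Vt E opt) => [e | e _]; first exact: eucl_weight_ge0.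
  by rewrite lexx /=; have := eucl_weight_ge0 p e; have := gamma_ge1; nra.
subst VO EO; have [Vm [Em min_m]] := exists_min_steiner_tree w' opt.1.
have [eVm eEm] := uniq w' w'_ge0 w'_bounds Vm Em min_m; subst Vm Em.
rewrite ltNge; apply/negP => le'; apply: neq.
have [-> ->] // : Vt' = Vt /\ E' = E.
apply: (uniq w' w'_ge0 w'_bounds); split=> // V'' E'' st''.
exact: le_trans le' (min_m.2 _ _ st'').
Qed.

Lemma gamma_stable_exchange Vt' E' :
  is_steiner_tree T Vt' E' -> (Vt', E') <> (Vt, E) ->
  gamma * \sum_(e in E :\: E') w e < \sum_(e in E' :\: E) w e.
Proof.
move=> st' neq; pose w' e := if e \in E then gamma * w e else w e.
have w'_ge0 e : 0 <= w' e.
  by rewrite /w'; case: ifP => _; have := eucl_weight_ge0 p e; have := gamma_ge1; nra.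
have w'_bounds (e : {set V}) : #|e| = 2 -> w e <= w' e <= gamma * w e.
  rewrite /w'; case: ifP => _ _; have := eucl_weight_ge0 p e; have := gamma_ge1;
    by rewrite ?lexx /=; nra.
have := gamma_stable_strict w'_ge0 w'_bounds st' neq.
rewrite /tree_weight (big_setID E') [X in _ < X](big_setID E) /= setIC ltrD2l.
have -> : \sum_(e in E :\: E') w' e = gamma * \sum_(e in E :\: E') w e.
  by rewrite mulr_sumr; apply: eq_bigr => e /setDP [Ee _]; rewrite /w' Ee.
have -> // : \sum_(e in E' :\: E) w' e = \sum_(e in E' :\: E) w e.
by apply: eq_bigr => e /setDP [_ /negbTE Ee]; rewrite /w' Ee.
Qed.

Variable s : V.
Local Notation N := (neighbors E s).
Local Notation dist a b := (eucl_dist (p a) (p b)).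

Lemma stable_swap_bound a b : a \in N -> b \in N -> a != b -> gamma * dist s b < dist a b.
Proof.
move=> Na Nb ab; have [[treeE T_Vt] _] := opt.
have sb_ab : [set s; b] != [set a; b] by rewrite set2_neq // eq_sym (neighbor_neq treeE Na).
set E1 := (E :\ [set s; b]) :|: [set [set a; b]].
have neq : (Vt, E1) <> (Vt, E).
  move=> [E1E]; have : [set s; b] \in E1 by rewrite E1E neighbor_edge.
  by rewrite !inE eqxx (negbTE sb_ab).
have := gamma_stable_exchange (conj (tree_swap_edge treeE Na Nb ab) T_Vt) neq.
have sb_le : w [set s; b] <= \sum_(e in E :\: E1) w e.
  rewrite -[X in X <= _](big_set1 +%R _ w) ler_sum_subset // => [|e _];
    last exact: eucl_weight_ge0.
  by rewrite sub1set !inE eqxx (negbTE sb_ab) neighbor_edge.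
have ab_ge : \sum_(e in E1 :\: E) w e <= w [set a; b].
  rewrite -[X in _ <= X](big_set1 +%R _ w) ler_sum_subset // => [|e _];
    last exact: eucl_weight_ge0.
  apply/subsetP => e; rewrite !inE => /andP[/negbTE nEe].
  by case/orP => [/andP[_] | //]; rewrite nEe.
rewrite !eucl_weight_set2 in sb_le ab_ge.
have : gamma * dist s b <= gamma * \sum_(e in E :\: E1) w e.
  by rewrite ler_wpM2l //; have := gamma_ge1; lra.
have := gamma_ge1; lra.
Qed.

Hypotheses (Vt_s : s \in Vt) (s_notin_T : s \notin T).

Lemma stable_contract_bound m :
  m \in N -> gamma * \sum_(a in N) dist s a < \sum_(a in N :\ m) dist m a.
Proof.
move=> Nm; have [[treeE T_Vt] _] := opt.
set E2 := contract_star E s m.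
have T_Vt2 : T \subset Vt :\ s.
  apply/subsetP => t Tt; rewrite in_setD1 (subsetP T_Vt) // andbT.
  by apply: contraNneq s_notin_T => <-.
have neq : (Vt :\ s, E2) <> (Vt, E).
  by move=> [VtE _]; move: Vt_s; rewrite -VtE !inE eqxx.
have := gamma_stable_exchange (conj (tree_contract_star treeE Vt_s Nm) T_Vt2) neq.
have s_notin_N : s \notin N by apply/negP => /(neighbor_neq treeE); rewrite eqxx.
have star_le : \sum_(a in N) dist s a <= \sum_(e in E :\: E2) w e.
  under eq_bigr => a _ do rewrite -eucl_weight_set2.
  rewrite -big_imset_set2 // ler_sum_subset // => [|e _]; last exact: eucl_weight_ge0.
  apply/subsetP => _ /imsetP [a Na ->]; rewrite in_setD (neighbor_edge Na) andbT.
  by apply: (contraL (notin_contract_star treeE Nm (e := [set s; a]))); rewrite !inE eqxx.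
have fan_ge : \sum_(e in E2 :\: E) w e <= \sum_(a in N :\ m) dist m a.
  under [X in _ <= X]eq_bigr => a _ do rewrite -eucl_weight_set2.
  rewrite -big_imset_set2 ?in_setD1 ?eqxx // ler_sum_subset // => [|e _];
    last exact: eucl_weight_ge0.
  apply/subsetP => e; rewrite in_setD in_setU in_setD => /andP[/negbTE nE].
  by case/orP => [/andP[_] | //]; rewrite nE.
have : gamma * \sum_(a in N) dist s a <= gamma * \sum_(e in E :\: E2) w e.
  by rewrite ler_wpM2l //; have := gamma_ge1; lra.
have := gamma_ge1; lra.
Qed.

End Stability.

Theorem mainTheorem1 (R : realType) (d : nat) (V : finType)
    (p : V -> 'rV[R]_d) (T : {set V}) (gamma : R) :
  injective p ->
  T != set0 ->
  1562%:R / 1000%:R < gamma ->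
  gamma_stable p T gamma ->
  forall (Vt : {set V}) (E : {set {set V}}),
    is_min_steiner_tree (eucl_weight p) T Vt E -> Vt \subset T.
Proof.
move=> inj_p /set0Pn [t Tt] gamma_gt stable Vt E opt.
have gamma_ge1 : 1 <= gamma by lra.
have [[treeE T_Vt] _] := opt.
apply/subsetP => s Vt_s; apply/contraT => s_notin_T.
have t_neq_s : t != s by apply: contraNneq s_notin_T => <-.
have := neighbors_neq0 treeE Vt_s (subsetP T_Vt t Tt) t_neq_s.
suff -> : neighbors E s = set0 by rewrite eqxx.
apply: (@no_star_configuration _ _ _ (fun a => eucl_dist (p s) (p a))
          (fun a b => eucl_dist (p a) (p b)) gamma) => //.
- move=> a Na; rewrite lt_def eucl_dist_ge0 andbT eucl_dist_eq0 (inj_eq inj_p).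
  by rewrite eq_sym (neighbor_neq treeE Na).
- by move=> a b _ _; rewrite (eucl_distC (p s) (p a)); exact: eucl_dist_triangle.
- exact: sum_sqr_eucl_dist_pairs.
- by move=> a b Na Nb ab /=; apply: (stable_swap_bound gamma_ge1 stable opt Na Nb ab).
- by move=> m Nm /=; apply: (stable_contract_bound gamma_ge1 stable opt Vt_s s_notin_T Nm).
Qed.
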